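(* Suppose that for each topological space $X$ a family $\mathbb{A}_X\subseteq\mathcal{P}(X)$ is fixed such that (a) $\mathbb{A}_X$ is an ideal; (b) if $Z\subseteq X$ then $\mathbb{A}_Z\subseteq\mathbb{A}_X$; (c) if $U\subseteq X$ is open then $\mathbb{A}_U=\{A\cap U:A\in\mathbb{A}_X\}$. If $X=\bigcup_{n<\omega}A_n$ with $A_n\in\mathbb{A}_X$ for all $n$, then $MA_{\pi(X)}(\text{countable})$ implies that $X$ is $\mathbb{A}$-separable.
   Context: $\pi(X)$ is the $\pi$-weight of $X$ (the least size of a $\pi$-base). $MA_\kappa(\text{countable})$ is Martin's Axiom for countable posets and $\kappa$ dense sets. $X$ is $\mathbb{A}$-separable if for every sequence $\{D_n:n<\omega\}$ of dense subsets of $X$ there are $A'_n\in\mathcal{P}(D_n)\cap\mathbb{A}_X$ with $\bigcup_{n<\omega}A'_n$ dense in $X$. *)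

From HB Require Import structures.
From mathcomp Require Import all_boot all_algebra.
From mathcomp Require Import all_classical all_reals all_analysis.
Set Implicit Arguments. Unset Strict Implicit. Unset Printing Implicit Defensive.
Local Open Scope classical_set_scope.

(* Subspaces: for Z : set X, the type [set_type Z] carries (as a canonical
   instance from mathcomp-analysis' subtype_topology.v) the subspace topology,
   i.e. the initial topology for the inclusion [set_val]. *)

Definition is_ideal (T : Type) (I : set (set T)) : Prop :=
  I set0 /\
  (forall A B, B `<=` A -> I A -> I B) /\
  (forall A B, I A -> I B -> I (A `|` B)).

Definition is_pi_base (X : topologicalType) (B : set (set X)) : Prop :=
  (forall V, B V -> open V /\ V !=set0) /\
  (forall U, open U -> U !=set0 -> exists2 V, B V & V `<=` U).

(* |I| <= pi(X): there is a pi-base B of least cardinality among all pi-bases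
   (so |B| = pi(X)) and I injects into B. *)
Definition card_le_pi_weight (I : Type) (X : topologicalType) : Prop :=
  exists B : set (set X),
    [/\ is_pi_base B,
        (forall B' : set (set X), is_pi_base B' ->
           exists f : set_type B -> set_type B', injective f) &
        exists g : I -> set_type B, injective g].

Definition is_partial_order (P : Type) (le : P -> P -> Prop) : Prop :=
  [/\ (forall p, le p p),
      (forall p q r, le p q -> le q r -> le p r) &
      (forall p q, le p q -> le q p -> p = q)].

Definition poset_dense (P : Type) (le : P -> P -> Prop) (E : set P) : Prop :=
  forall p, exists2 q, E q & le q p.

Definition poset_filter (P : Type) (le : P -> P -> Prop) (G : set P) : Prop :=
  [/\ G !=set0,
      (forall p q, G p -> le p q -> G q) &
      (forall p q, G p -> G q -> exists2 r, G r & le r p /\ le r q)].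

Definition MA_pi_weight_countable (X : topologicalType) : Prop :=
  forall (P : countType) (le : P -> P -> Prop), is_partial_order le ->
  inhabited P ->
  forall (I : Type) (E : I -> set P), card_le_pi_weight I X ->
    (forall i, poset_dense le (E i)) ->
    exists G : set P, poset_filter le G /\ forall i, G `&` E i !=set0.

Definition A_separable (A : forall X : topologicalType, set (set X))
  (X : topologicalType) : Prop :=
  forall D : nat -> set X, (forall n, dense (D n)) ->
    exists A' : nat -> set X,
      (forall n, A' n `<=` D n /\ A X (A' n)) /\ dense (\bigcup_n A' n).

Definition admissible_family (A : forall X : topologicalType, set (set X))
  : Prop :=
  (forall X : topologicalType, is_ideal (A X)) /\
  (forall (X : topologicalType) (Z : set X) (S : set (set_type Z)),
      A (set_type Z) S -> A X (set_val @` S)) /\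
  (forall (X : topologicalType) (U : set X), open U ->
     forall S : set (set_type U),
       A (set_type U) S <-> exists2 B, A X B & set_val @` S = B `&` U).

From HB Require Import structures.
From mathcomp Require Import all_boot all_algebra.
From mathcomp Require Import all_classical all_reals all_analysis.
Set Implicit Arguments. Unset Strict Implicit. Unset Printing Implicit Defensive.
Local Open Scope classical_set_scope.

(* Fix a pi-base B of least cardinality and force with finite sequences of
   naturals ordered by extension.  For V in B the conditions p having some
   n < size p with V, D n and An (p n) meeting are dense, so MA gives a filter
   meeting all of them; it determines a partial function f : nat -> nat, and
   A'_n := D n `&` An (f n) lies in the ideal while the union of the A'_n meets
   every member of B. *)

(* A maximal family S of pairwise nowhere-equal selectors of F exhausts some
   member i0; then b |-> h_b j, with h_b the selector of S through b at i0,
   injects i0 into every member j. *)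
Section MinimalCardinality.
Variables (T : Type) (F : set (set T)).

Definition disjoint_selectors (S : set (set_type F -> T)) : Prop :=
  (forall h, S h -> forall i, sval i (h i)) /\
  (forall h1 h2, S h1 -> S h2 -> h1 <> h2 -> forall i, h1 i <> h2 i).

Lemma maximal_disjoint_selectors : exists S,
  disjoint_selectors S /\ forall S', S `<` S' -> ~ disjoint_selectors S'.
Proof.
apply: Zorn_bigcup => C selC totC; split.
  by move=> h [S CS Sh] i; exact: (selC S CS).1.
move=> h1 h2 [S1 CS1 S1h1] [S2 CS2 S2h2].
have [S12|S21] := totC _ _ CS1 CS2.
  exact: (selC S2 CS2).2 (S12 _ S1h1) S2h2.
exact: (selC S1 CS1).2 S1h1 (S21 _ S2h2).
Qed.

Lemma maximal_selectors_exhaust S : F !=set0 ->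
  disjoint_selectors S -> (forall S', S `<` S' -> ~ disjoint_selectors S') ->
  exists i0 : set_type F, forall b, sval i0 b -> exists2 h, S h & h i0 = b.
Proof.
move=> [C FC] [selS disjS] maxS; apply: contrapT => noexh.
have fresh i : exists b, sval i b /\ forall h, S h -> h i <> b.
  apply: contrapT => nofresh; apply: noexh; exists i => b ib.
  apply: contrapT => nohit; apply: nofresh; exists b; split => // h Sh hib.
  by apply: nohit; exists h.
have [h0 h0fresh] := choice fresh.
apply: (maxS (S `|` [set h0])).
  split; first by move=> h Sh; left.
  move=> /(_ h0 (or_intror erefl)) Sh0.
  exact: (h0fresh (exist _ C (mem_set FC))).2 h0 Sh0 erefl.
split; first by move=> h [Sh|->] i; [exact: selS | exact: (h0fresh i).1].
move=> h1 h2 [S1|->] [S2|->] neq i.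
- exact: disjS.
- exact: (h0fresh i).2 h1 S1.
- by move=> e; exact: (h0fresh i).2 h2 S2 (esym e).
- by [].
Qed.

Lemma exhausted_injects S i0 : disjoint_selectors S ->
  (forall b, sval i0 b -> exists2 h, S h & h i0 = b) ->
  forall j : set_type F, exists f : set_type (sval i0) -> set_type (sval j), injective f.
Proof.
move=> [selS disjS] exh j.
have hit (b : set_type (sval i0)) : {h | S h /\ h i0 = sval b}.
  by apply: cid; have [h Sh <-] := exh _ (set_mem (svalP b)); exists h.
exists (fun b => exist _ (sval (hit b) j) (mem_set (selS _ (proj1 (svalP (hit b))) j))).
move=> b1 b2 /(congr1 sval) /=.
case: (hit b1) => h1 [S1 e1]; case: (hit b2) => h2 [S2 e2] /= e.
have h12 : h1 = h2 by apply: contrapT => neq; exact: disjS S1 S2 neq j e.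
by apply: val_inj; rewrite /= -e1 -e2 h12.
Qed.

Lemma minimal_card_member : F !=set0 ->
  exists2 B0, F B0 & forall B, F B -> exists f : set_type B0 -> set_type B, injective f.
Proof.
move=> F0; have [S [selS maxS]] := maximal_disjoint_selectors.
have [i0 exh] := maximal_selectors_exhaust F0 selS maxS.
exists (sval i0); first exact: set_mem (svalP i0).
by move=> B FB; exact: exhausted_injects selS exh (exist _ B (mem_set FB)).
Qed.

End MinimalCardinality.

Lemma open_nonempty_pi_base (X : topologicalType) :
  is_pi_base [set V : set X | open V /\ V !=set0].
Proof. by split=> // U oU U0; exists U. Qed.

Lemma card_le_pi_weight_minimal (X : topologicalType) :
  exists2 B : set (set X), is_pi_base B & card_le_pi_weight (set_type B) X.
Proof.
have [B piB minB] := minimal_card_member (ex_intro _ _ (open_nonempty_pi_base X)).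
by exists B => //; exists B; split => //; exists id.
Qed.

Definition extends (T : eqType) (q p : seq T) : Prop := prefix p q.

Lemma extends_partial_order (T : eqType) : is_partial_order (@extends T).
Proof.
split=> [p|p q r qp rq|p q qp pq]; first exact: prefix_refl.
  exact: prefix_trans rq qp.
have szqp : size q = size p.
  by apply/eqP; rewrite eqn_leq (size_prefix qp) (size_prefix pq).
by move: qp; rewrite /extends prefixE szqp take_size => /eqP.
Qed.

Lemma prefix_nth_agree (T : eqType) (x0 : T) (p q r : seq T) n :
  prefix p r -> prefix q r -> n < size p -> n < size q ->
  nth x0 p n = nth x0 q n.
Proof.
move=> /prefixP[s ->] /prefixP[t e] np nq.
by move: e => /(congr1 (nth x0 ^~ n)); rewrite !nth_cat np nq.
Qed.

Lemma extends_filter_nth_agree (T : eqType) (x0 : T) (G : set (seq T)) p q n :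
  poset_filter (@extends T) G -> G p -> G q ->
  n < size p -> n < size q -> nth x0 p n = nth x0 q n.
Proof.
move=> [_ _ Gdir] Gp Gq np nq; have [r _ [pr qr]] := Gdir p q Gp Gq.
exact: prefix_nth_agree pr qr np nq.
Qed.

Section GenericSelection.
Variables (X : topologicalType) (An D : nat -> set X).

Definition code_hits (V : set X) (p : seq nat) : Prop :=
  exists2 n, n < size p & V `&` D n `&` An (nth 0 p n) !=set0.

Lemma code_hits_dense V : [set: X] = \bigcup_n An n ->
  (forall n, dense (D n)) -> open V -> V !=set0 ->
  poset_dense (@extends nat) (code_hits V).
Proof.
move=> cover Ddense oV V0 p.
have [x [Vx Dx]] := Ddense (size p) V V0 oV.
have [k _ Akx] : (\bigcup_n An n) x by rewrite -cover.
exists (rcons p k); last exact: prefix_rcons.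
exists (size p); first by rewrite size_rcons.
by exists x; rewrite nth_rcons ltnn eqxx.
Qed.

Definition generic_piece (G : set (seq nat)) (n : nat) : set X :=
  D n `&` [set x | exists2 p, G p & n < size p /\ An (nth 0 p n) x].

(* Codes in a filter agree wherever both are defined, so the piece lies in a
   single [An k], or is empty. *)
Lemma generic_piece_ideal (I : set (set X)) G n :
  is_ideal I -> (forall k, I (An k)) ->
  poset_filter (@extends nat) G -> I (generic_piece G n).
Proof.
move=> [I0 [Isub _]] IAn Gfilter.
have [[p Gp np]|nocode] := pselect (exists2 p, G p & n < size p).
  apply: (Isub (An (nth 0 p n))) (IAn _) => x [_ [q Gq [nq Aqx]]].
  by rewrite (extends_filter_nth_agree 0 Gfilter Gp Gq np nq).
by apply: (Isub set0) I0 => x [_ [q Gq [nq _]]]; apply: nocode; exists q.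
Qed.

Lemma generic_pieces_dense (B : set (set X)) G : is_pi_base B ->
  (forall V, B V -> exists2 p, G p & code_hits V p) ->
  dense (\bigcup_n generic_piece G n).
Proof.
move=> [_ piB] Ghits O O0 oO.
have [V BV VO] := piB O oO O0.
have [p Gp [n np [x [[Vx Dx] Ax]]]] := Ghits V BV.
by exists x; split; [exact: VO | exists n => //; split => //; exists p].
Qed.

End GenericSelection.

Theorem lemma5p1 (A : forall X : topologicalType, set (set X)) :
  admissible_family A ->
  forall (X : topologicalType) (An : nat -> set X),
    (forall n, A X (An n)) ->
    [set: X] = \bigcup_n An n ->
    MA_pi_weight_countable X ->
    A_separable A X.
Proof.
move=> [Aideal _] X An AAn cover MA D Ddense.
have [B piB cardB] := card_le_pi_weight_minimal X.
have hits_dense (V : set_type B) :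
    poset_dense (@extends nat) (code_hits An D (sval V)).
  have [oV V0] := piB.1 _ (set_mem (svalP V)).
  exact: code_hits_dense cover Ddense oV V0.
have [G [Gfilter GE]] :=
  MA _ _ (extends_partial_order nat) (inhabits [::]) _ _ cardB hits_dense.
exists (generic_piece An D G); split.
  by move=> n; split; [move=> x [] | exact: generic_piece_ideal].
apply: generic_pieces_dense piB _ => V BV.
by have [p [Gp hit]] := GE (exist _ V (mem_set BV)); exists p.
Qed.
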